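(* The Jouanolou foliation $\mathcal{J}_2$ satisfies property $\mathcal{P}_S$: the vector field $J_2$ does not vanish on $\mathbf{C}^3\setminus\{0\}$, every singular point of $\mathcal{J}_2$ is hyperbolic, and every singular point of $\mathcal{J}_2$ is a source of the real field $W$.
   Context: $\mathcal{J}_2$ is the foliation of $\mathbf{P}^2_{\mathbf{C}}$ induced by the divergence-free homogeneous vector field $J_2=y^2\partial_x+z^2\partial_y+x^2\partial_z$ on $\mathbf{C}^3$. With $\Pi:\mathbf{C}^3\setminus\{0\}\to\mathbf{P}^2_{\mathbf{C}}$ and $p\cdot p'=x\bar x'+y\bar y'+z\bar z'$, the real field $W$ is the projection to $\mathbf{P}^2_{\mathbf{C}}$ of the real vector field $\mathrm{Re}(\tilde\rho J_2)$, $\tilde\rho(p)=-2(p\cdot J_2(p))/\|p\|^{4}$. A singular point is hyperbolic if the two eigenvalues of a local holomorphic vector field defining the foliation there are not $\mathbf{R}$-collinear; it is a source of $W$ if all eigenvalues of the linearization of $W$ there have positive real part. *)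

From HB Require Import structures.
From mathcomp Require Import all_boot all_order all_algebra.
From mathcomp Require Import all_classical all_reals all_analysis.
From mathcomp Require Export complex.
Import Order.TTheory GRing.Theory Num.Theory.
Import numFieldNormedType.Exports.

Set Implicit Arguments.
Unset Strict Implicit.
Unset Printing Implicit Defensive.

Local Open Scope ring_scope.
Local Open Scope complex_scope.

Section Jouanolou.
Variable R : realType.
Local Notation C := R[i].

Definition ix : 'I_3 := ord0.
Definition iy : 'I_3 := inord 1.
Definition iz : 'I_3 := inord 2.

Definition J2 (p : {ffun 'I_3 -> C}) : {ffun 'I_3 -> C} :=
  [ffun i => if i == ix then p iy ^+ 2
             else if i == iy then p iz ^+ 2 else p ix ^+ 2].

Definition hdot (p q : {ffun 'I_3 -> C}) : C := \sum_i p i * (q i)^*.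

Definition rho (p : {ffun 'I_3 -> C}) : C :=
  - 2%:R * hdot p (J2 p) / (hdot p p) ^+ 2.

(* Affine chart k of P^2 = {p_k <> 0}:  inverse chart w |-> [p] with p_k = 1
   and p_(lift k j) = w_j ; chart map  p |-> (p_(lift k j) / p_k)_j. *)
Definition chart_inv (k : 'I_3) (w : {ffun 'I_2 -> C}) : {ffun 'I_3 -> C} :=
  [ffun i => if unlift k i is Some j then w j else 1].

(* Differential at p (with p_k <> 0) of the chart map p |-> (p_(lift k j)/p_k)_j
   of Pi, applied to a tangent vector V of C^3. *)
Definition dchart (k : 'I_3) (p V : {ffun 'I_3 -> C}) : {ffun 'I_2 -> C} :=
  [ffun j => (V (lift k j) * p k - p (lift k j) * V k) / (p k) ^+ 2].

Definition Xchart (k : 'I_3) (w : {ffun 'I_2 -> C}) : {ffun 'I_2 -> C} :=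
  dchart k (chart_inv k w) (J2 (chart_inv k w)).

(* The real vector field W in chart k: projection of Re(rho~ J_2),
   a real vector field on C^2 = R^4. *)
Definition Wchart (k : 'I_3) (w : {ffun 'I_2 -> C}) : {ffun 'I_2 -> C} :=
  dchart k (chart_inv k w) (rho (chart_inv k w) *: J2 (chart_inv k w)).

Definition e2 (l : 'I_2) : {ffun 'I_2 -> C} := [ffun j => (j == l)%:R].

Definition holJac (k : 'I_3) (w : {ffun 'I_2 -> C}) : 'M[C]_2 :=
  \matrix_(j, l) derive (fun t : C^o => (Xchart k (w + t *: e2 l) j : C^o)) 0 1.

(* Real coordinates on C^2 = R^4: (Re w_0, Im w_0, Re w_1, Im w_1). *)
Definition rcoord (a : 'I_4) (v : {ffun 'I_2 -> C}) : R :=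
  let z := v (inord a./2) in if odd a then complex.Im z else complex.Re z.
Definition rdir (b : 'I_4) : {ffun 'I_2 -> C} :=
  (if odd b then 'i else 1) *: e2 (inord b./2).

Definition realJacW (k : 'I_3) (w : {ffun 'I_2 -> C}) : 'M[R]_4 :=
  \matrix_(a, b) derive (fun t : R => rcoord a (Wchart k (w + t%:C *: rdir b))) 0 1.

Definition Rcollinear (m1 m2 : C) : Prop :=
  exists a b : R, (a != 0 \/ b != 0) /\ a%:C * m1 + b%:C * m2 = 0.

Definition hyperbolic (A : 'M[C]_2) : Prop :=
  forall m1 m2 : C, char_poly A = ('X - m1%:P) * ('X - m2%:P) ->
    ~ Rcollinear m1 m2.

Definition source (M : 'M[R]_4) : Prop :=
  forall m : C, eigenvalue (map_mx (real_complex R) M) m -> 0 < complex.Re m.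

End Jouanolou.

From HB Require Import structures.
From mathcomp Require Import all_boot all_order all_algebra.
From mathcomp Require Import all_classical all_reals all_analysis.
From mathcomp Require Import complex.
From mathcomp Require Import ring lra.
Import Order.TTheory GRing.Theory Num.Theory.
Import numFieldNormedType.Exports.
Local Open Scope ring_scope.
Local Open Scope complex_scope.

(* At a singular point of chart k, the lifted point p (with p_k = 1) is an
   eigenvector of the quadratic field, J2 p = lambda p, i.e.
   p_(succ3 i)^2 = lambda p_i for the cyclic shift x -> y -> z -> x; these
   relations force |p_i| = |lambda| = 1.  In the chart, the linear part of the
   foliation has trace -4 lambda and determinant 7 lambda^2 (eigenvalues
   lambda (-2 +- i sqrt 3)), and tr^2 / det = 16/7 lies in (0, 4), which rules
   out R-collinear eigenvalues.  Since the chart field vanishes at the point,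
   the linearization of W is rho(p) times the holomorphic one, read as a real
   4x4 matrix M; as rho(p) lambda = -2/3, its complex trace 8/3 and determinant
   28/9 are real, so Cayley-Hamilton gives M^2 = 8/3 M - 28/9 and every
   eigenvalue of M has real part 4/3. *)

Section ComplexValuedDerivative.
Context {R : realType}.
Local Notation C := R[i].
Local Notation Re := complex.Re.
Local Notation Im := complex.Im.

Lemma cReM (u v : C) : Re (u * v) = Re u * Re v - Im u * Im v.
Proof. by case: u => a b; case: v => c d. Qed.
Lemma cImM (u v : C) : Im (u * v) = Re u * Im v + Im u * Re v.
Proof. by case: u => a b; case: v => c d /=; rewrite addrC. Qed.
Lemma cReD (u v : C) : Re (u + v) = Re u + Re v. Proof. by case: u => a b; case: v => c d. Qed.
Lemma cImD (u v : C) : Im (u + v) = Im u + Im v. Proof. by case: u => a b; case: v => c d. Qed.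
Lemma cReN (u : C) : Re (- u) = - Re u. Proof. by case: u. Qed.
Lemma cImN (u : C) : Im (- u) = - Im u. Proof. by case: u. Qed.
Lemma cReJ (u : C) : Re u^* = Re u. Proof. by case: u. Qed.
Lemma cImJ (u : C) : Im u^* = - Im u. Proof. by case: u. Qed.
Lemma cReV (u : C) : Re u^-1 = Re u * (Re u * Re u + Im u * Im u)^-1.
Proof. by case: u => a b; rewrite /= !expr2. Qed.
Lemma cImV (u : C) : Im u^-1 = - (Im u * (Re u * Re u + Im u * Im u)^-1).
Proof. by case: u => a b; rewrite /= !expr2. Qed.

(* [R[i]] is not a normed [R]-module in the library, so complex-valued functions
   of a real variable are differentiated componentwise. *)
Definition is_cderive (x : R) (f : R -> C) (d : C) :=
  is_derive x 1 (fun t => Re (f t)) (Re d) /\ is_derive x 1 (fun t => Im (f t)) (Im d).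

Definition cderivable (x : R) (f : R -> C) :=
  derivable (fun t => Re (f t)) x 1 /\ derivable (fun t => Im (f t)) x 1.

Definition cderive (x : R) (f : R -> C) : C :=
  (derive (fun t => Re (f t)) x 1)%:C + 'i * (derive (fun t => Im (f t)) x 1)%:C.

Context {x : R}.

Lemma cderivableP {f : R -> C} : cderivable x f -> is_cderive x f (cderive x f).
Proof.
case=> /derivableP dRe /derivableP dIm; split.
- by apply: is_derive_eq dRe _; rewrite /cderive /=; ring.
- by apply: is_derive_eq dIm _; rewrite /cderive /=; ring.
Qed.

Lemma is_cderive_cderivable {f : R -> C} {d : C} : is_cderive x f d -> cderivable x f.
Proof. by case=> -[dRe _] [dIm _]; split. Qed.

Lemma is_cderive_eq {f : R -> C} {d d' : C} : is_cderive x f d -> d = d' -> is_cderive x f d'.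
Proof. by move=> ? <-. Qed.

Lemma is_cderive_cst (c : C) : is_cderive x (fun=> c) 0.
Proof. by split; apply: is_derive_cst. Qed.

Lemma is_cderive_affine (a b : C) : is_cderive x (fun t => a + t%:C * b) b.
Proof.
split.
- under eq_fun do rewrite cReD cReM /= mul0r subr0.
  by apply: is_derive_eq; rewrite /GRing.scale /=; ring.
- under eq_fun do rewrite cImD cImM /= mul0r addr0.
  by apply: is_derive_eq; rewrite /GRing.scale /=; ring.
Qed.

Lemma is_cderiveD {f g : R -> C} {a b : C} :
  is_cderive x f a -> is_cderive x g b -> is_cderive x (fun t => f t + g t) (a + b).
Proof.
case=> fRe fIm [gRe gIm]; split.
- under eq_fun do rewrite cReD.
  by apply: is_derive_eq; rewrite cReD.
- under eq_fun do rewrite cImD.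
  by apply: is_derive_eq; rewrite cImD.
Qed.

Lemma is_cderiveN {f : R -> C} {a : C} :
  is_cderive x f a -> is_cderive x (fun t => - f t) (- a).
Proof.
case=> fRe fIm; split.
- under eq_fun do rewrite cReN.
  by apply: is_derive_eq; rewrite cReN.
- under eq_fun do rewrite cImN.
  by apply: is_derive_eq; rewrite cImN.
Qed.

Lemma is_cderiveM {f g : R -> C} {a b : C} : is_cderive x f a -> is_cderive x g b ->
  is_cderive x (fun t => f t * g t) (a * g x + f x * b).
Proof.
case=> fRe fIm [gRe gIm]; split.
- under eq_fun do rewrite cReM.
  by apply: is_derive_eq; rewrite cReD !cReM /GRing.scale /=; ring.
- under eq_fun do rewrite cImM.
  by apply: is_derive_eq; rewrite cImD !cImM /GRing.scale /=; ring.
Qed.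

Lemma cderivableM {f g : R -> C} :
  cderivable x f -> cderivable x g -> cderivable x (fun t => f t * g t).
Proof.
by move=> /cderivableP df /cderivableP dg; exact: is_cderive_cderivable (is_cderiveM df dg).
Qed.

Lemma cderivable_sum (I : Type) (r : seq I) (F : I -> R -> C) :
  (forall i, cderivable x (F i)) -> cderivable x (fun t => \sum_(i <- r) F i t).
Proof.
move=> dF; elim: r => [|i r IHr].
  under eq_fun do rewrite big_nil.
  exact: is_cderive_cderivable (is_cderive_cst 0).
under eq_fun do rewrite big_cons.
exact: is_cderive_cderivable (is_cderiveD (cderivableP (dF i)) (cderivableP IHr)).
Qed.

Lemma cderivable_conj {f : R -> C} : cderivable x f -> cderivable x (fun t => (f t)^*).
Proof.
case=> fRe fIm; split.
- under eq_fun do rewrite cReJ.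
  exact: fRe.
- under eq_fun do rewrite cImJ.
  exact: derivableN fIm.
Qed.

Lemma cderivableV (f : R -> C) :
  f x != 0 -> cderivable x f -> cderivable x (fun t => (f t)^-1).
Proof.
move=> fx0 [fRe fIm].
have dnorm2 : derivable (fun t => (Re (f t) * Re (f t) + Im (f t) * Im (f t))^-1) x 1.
  apply: derivableV; last exact: derivableD (derivableM fRe fRe) (derivableM fIm fIm).
  apply: contra fx0; case: (f x) => a b /=; rewrite -!expr2.
  by rewrite paddr_eq0 ?sqr_ge0 // !sqrf_eq0 => /andP[/eqP-> /eqP->]; exact: eqxx.
split.
- under eq_fun do rewrite cReV.
  exact: derivableM fRe dnorm2.
- under eq_fun do rewrite cImV.
  exact: derivableN (derivableM fIm dnorm2).
Qed.

Lemma is_cderiveM_eq0 {g h : R -> C} {d : C} : cderivable x g -> is_cderive x h d -> h x = 0 ->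
  is_cderive x (fun t => g t * h t) (g x * d).
Proof.
move=> /cderivableP dg dh hx0.
by have := is_cderiveM dg dh; rewrite hx0 mulr0 add0r.
Qed.

End ComplexValuedDerivative.

Section TwoByTwo.
Context {F : comNzRingType}.
Local Notation o0 := (ord0 : 'I_2).
Local Notation o1 := (ord_max : 'I_2).

Lemma ord2P (i : 'I_2) : i = o0 \/ i = o1.
Proof. by case: i => [[|[|//]] ?]; [left|right]; exact: val_inj. Qed.

Lemma ord2_lift0 : lift o0 ord0 = o1. Proof. exact: val_inj. Qed.
Lemma ord2_lift1 : lift o1 ord0 = o0. Proof. exact: val_inj. Qed.

Lemma inord2_0 : inord 0 = ord0 :> 'I_2. Proof. by apply: val_inj; rewrite /= inordK. Qed.
Lemma inord2_1 : inord 1 = ord_max :> 'I_2. Proof. by apply: val_inj; rewrite /= inordK. Qed.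

Lemma mxtrace2 (A : 'M[F]_2) : \tr A = A o0 o0 + A o1 o1.
Proof. by rewrite /mxtrace big_ord_recl big_ord1 ord2_lift0. Qed.

Lemma det_mx22 (A : 'M[F]_2) : \det A = A o0 o0 * A o1 o1 - A o0 o1 * A o1 o0.
Proof.
rewrite (expand_det_row _ ord0) big_ord_recl big_ord1 /cofactor !det_mx11 !mxE /=.
rewrite !ord2_lift0 ord2_lift1 expr0 expr1; ring.
Qed.

Lemma mx22_Cayley_Hamilton (A : 'M[F]_2) : A *m A = \tr A *: A - \det A *: 1%:M.
Proof.
apply/matrixP => i j; rewrite mxtrace2 det_mx22 !mxE big_ord_recl big_ord1 ord2_lift0.
by case: (ord2P i) => ->; case: (ord2P j) => -> /=; ring.
Qed.

Lemma char_poly2_factor_tr_det (A : 'M[F]_2) (m1 m2 : F) :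
  char_poly A = ('X - m1%:P) * ('X - m2%:P) -> m1 + m2 = \tr A /\ m1 * m2 = \det A.
Proof.
move=> chiA; split.
- apply: oppr_inj; rewrite -char_poly_trace // chiA.
  by rewrite !(mulrBl, mulrBr) !coefE /=; ring.
- have := char_poly_det A; rewrite chiA sqrrN expr1n mul1r => <-.
  by rewrite !(mulrBl, mulrBr) !coefE /=; ring.
Qed.

End TwoByTwo.

Section ComplexMatrices.
Context {R : realType}.
Local Notation C := R[i].
Local Notation Re := complex.Re.
Local Notation Im := complex.Im.

(* If a m1 + b m2 = 0 then 0 = (a m1 + b m2)(b m1 + a m2) = (kappa a b + (a - b)^2) det A,
   and 4 (kappa a b + (a - b)^2) = (4 - kappa)(a - b)^2 + kappa (a + b)^2. *)
Lemma hyperbolic_of_tr_det (A : 'M[C]_2) (kappa : R) : 0 < kappa < 4%:R ->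
  \det A != 0 -> \tr A ^+ 2 = kappa%:C * \det A -> hyperbolic A.
Proof.
move=> /andP[k_gt0 k_lt4] detA0 trA m1 m2 chiA [a [b [ab0 abm]]].
move/char_poly2_factor_tr_det: chiA => [sum_m prod_m].
have : ((a - b) ^+ 2 + kappa * (a * b))%:C * \det A = 0.
  transitivity ((a%:C * m1 + b%:C * m2) * (b%:C * m1 + a%:C * m2)); last first.
    by rewrite abm mul0r.
  have -> : (a%:C * m1 + b%:C * m2) * (b%:C * m1 + a%:C * m2) =
      (a * b)%:C * (m1 + m2) ^+ 2 + ((a - b) ^+ 2)%:C * (m1 * m2).
    by rewrite rmorphM rmorphXn rmorphB; ring.
  by rewrite sum_m prod_m trA rmorphD rmorphM; ring.
move/eqP; rewrite mulf_eq0 (negbTE detA0) orbF -(rmorph0 (real_complex R)).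
move=> /eqP/complexI q0.
have : (4%:R - kappa) * (a - b) ^+ 2 + kappa * (a + b) ^+ 2 = 0.
  by rewrite -[RHS](mulr0 4%:R) -q0; ring.
have nn1 : 0 <= (4%:R - kappa) * (a - b) ^+ 2 by rewrite mulr_ge0 ?sqr_ge0 // subr_ge0 ltW.
have nn2 : 0 <= kappa * (a + b) ^+ 2 by rewrite mulr_ge0 ?sqr_ge0 // ltW.
move/eqP; rewrite paddr_eq0 // !mulf_eq0 !subr_eq0 (gt_eqF k_gt0) (gt_eqF k_lt4) /= !orbb.
move=> /andP[/eqP eq_ab]; rewrite eq_ab -mulr2n mulrn_eq0 /= => /eqP b0.
by move: ab0; rewrite eq_ab b0 eqxx => -[].
Qed.

Lemma Re_root_quadratic (tau delta : R) (m : C) : tau ^+ 2 < 4%:R * delta ->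
  m ^+ 2 - tau%:C * m + delta%:C = 0 -> Re m = tau / 2%:R.
Proof.
case: m => x y disc0 /eqP; rewrite eq_complex /= => /andP[/eqP re0 /eqP im0].
have y0 : y != 0.
  apply: contraTneq disc0 => y0; rewrite -leNgt; move: re0; rewrite y0.
  have := sqr_ge0 (2%:R * x - tau); nra.
have : y * (2%:R * x - tau) = 0 by rewrite -im0; ring.
move/eqP; rewrite mulf_eq0 (negbTE y0) subr_eq0 /= => /eqP <-.
by rewrite mulrC mulKf ?pnatr_eq0.
Qed.

Lemma source_of_mx_quadratic (M : 'M[R]_4) (tau delta : R) :
  tau ^+ 2 < 4%:R * delta -> 0 < tau -> M *m M = tau *: M - delta *: 1%:M -> source M.
Proof.
move=> disc0 tau_gt0 sqM m /eigenvalueP[v vM v0].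
set N := map_mx (real_complex R) M.
have sqN : N *m N = tau%:C *: N - delta%:C *: 1%:M.
  by rewrite -map_mxM sqM map_mxD map_mxN !map_mxZ map_mx1.
have : (m ^+ 2 - tau%:C * m + delta%:C) *: v = 0.
  have vNN : v *m (N *m N) = m ^+ 2 *: v.
    by rewrite mulmxA vM -scalemxAl vM scalerA expr2.
  move: vNN; rewrite sqN mulmxBr -!scalemxAr vM mulmx1 scalerA => vNN.
  by rewrite !scalerDl scaleNr -vNN addrAC subrK subrr.
move/eqP; rewrite scaler_eq0 (negbTE v0) orbF => /eqP root_m.
by rewrite (Re_root_quadratic _ _ _ disc0 root_m) divr_gt0.
Qed.

(* The matrix of the R-linear map [v |-> B v] of C^2 in the real coordinates
   [rcoord] / [rdir]. *)
Definition realmx (B : 'M[C]_2) : 'M[R]_4 := \matrix_(a, b)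
  let z := B (inord a./2) (inord b./2) * (if odd b then 'i else 1) in
  if odd a then Im z else Re z.

Lemma realmxM (B1 B2 : 'M[C]_2) : realmx (B1 *m B2) = realmx B1 *m realmx B2.
Proof.
apply/matrixP => a b; rewrite !mxE !big_ord_recr !big_ord0 /= !add0r !mxE /=.
rewrite inord2_0 inord2_1 (_ : widen_ord _ ord_max = ord0); last exact: val_inj.
move: (B1 _ ord0) (B1 _ ord_max) (B2 ord0 _) (B2 ord_max _) => [? ?] [? ?] [? ?] [? ?].
by case: (odd a); case: (odd b) => /=; ring.
Qed.

Lemma realmxB (B1 B2 : 'M[C]_2) : realmx (B1 - B2) = realmx B1 - realmx B2.
Proof.
apply/matrixP => a b; rewrite !mxE; move: (B1 _ _) (B2 _ _) => [? ?] [? ?].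
by case: (odd a); case: (odd b) => /=; ring.
Qed.

Lemma realmxZ (r : R) (B : 'M[C]_2) : realmx (r%:C *: B) = r *: realmx B.
Proof.
apply/matrixP => a b; rewrite !mxE; move: (B _ _) => [? ?].
by case: (odd a); case: (odd b) => /=; ring.
Qed.

Lemma realmx1 : realmx 1%:M = 1%:M.
Proof.
apply/matrixP => a b; rewrite !mxE.
by case: a => [[|[|[|[|//]]]] ?]; case: b => [[|[|[|[|//]]]] ?];
  rewrite /= ?inord2_0 ?inord2_1 /=; ring.
Qed.

Lemma source_realmx (B : 'M[C]_2) (tau delta : R) : \tr B = tau%:C -> \det B = delta%:C ->
  tau ^+ 2 < 4%:R * delta -> 0 < tau -> source (realmx B).
Proof.
move=> trB detB disc0 tau_gt0; apply: source_of_mx_quadratic disc0 tau_gt0 _.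
by rewrite -realmxM mx22_Cayley_Hamilton trB detB realmxB !realmxZ realmx1.
Qed.

End ComplexMatrices.

Definition succ3 (i : 'I_3) : 'I_3 := if i == ix then iy else if i == iy then iz else ix.

Lemma iyE : iy = Ordinal (isT : 1 < 3)%N. Proof. by apply: val_inj; rewrite /= inordK. Qed.
Lemma izE : iz = Ordinal (isT : 2 < 3)%N. Proof. by apply: val_inj; rewrite /= inordK. Qed.

Lemma ord3P (i : 'I_3) : [\/ i = ix, i = iy | i = iz].
Proof.
rewrite iyE izE; case: i => [[|[|[|//]]] ?];
  [apply: Or31 | apply: Or32 | apply: Or33]; exact: val_inj.
Qed.

Lemma succ3_order3 (i : 'I_3) : succ3 (succ3 (succ3 i)) = i.
Proof. by case: (ord3P i) => ->; rewrite /succ3 iyE izE. Qed.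

Lemma succ3_orbit (k i : 'I_3) : i \in [:: k; succ3 k; succ3 (succ3 k)].
Proof. by case: (ord3P k) => ->; case: (ord3P i) => ->; rewrite /succ3 iyE izE. Qed.

Lemma succ3_lift (k : 'I_3) :
  [/\ succ3 k = lift k ord0, succ3 (lift k ord0) = lift k ord_max
    & succ3 (lift k ord_max) = k] \/
  [/\ succ3 k = lift k ord_max, succ3 (lift k ord_max) = lift k ord0
    & succ3 (lift k ord0) = k].
Proof.
case: (ord3P k) => ->; rewrite /succ3 iyE izE; [left | right | left];
  by split; apply: val_inj.
Qed.

Lemma norm_eq1_of_cusp (F : numDomainType) (u v : F) :
  v ^+ 2 = u ^+ 3 -> v * u ^+ 2 = 1 -> `|u| = 1 /\ `|v| = 1.
Proof.
move=> cusp uv1.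
have n1 : `|v| ^+ 2 = `|u| ^+ 3 by rewrite -!normrX cusp.
have n2 : `|v| * `|u| ^+ 2 = 1 by rewrite -normrX -normrM uv1 normr1.
have normu : `|u| = 1.
  apply/eqP; rewrite -(@pexpr_eq1 _ _ 7) //; apply/eqP.
  by rewrite (_ : 7 = 3 + 2 * 2)%N // exprD -n1 exprM -exprMn n2 expr1n.
by split=> //; rewrite -n2 normu expr1n mulr1.
Qed.

Section Jouanolou.
Context {R : realType}.
Local Notation C := R[i].
Implicit Types (p : {ffun 'I_3 -> C}) (w v : {ffun 'I_2 -> C}).

Lemma J2E p i : J2 p i = p (succ3 i) ^+ 2.
Proof. by rewrite ffunE /succ3; case: (i == ix); case: (i == iy). Qed.

Lemma J2_neq0 p : p != 0 -> J2 p != 0.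
Proof.
apply: contraNneq => J2p0; apply/eqP/ffunP => i; rewrite ffunE -(succ3_order3 i).
by apply/eqP; rewrite -sqrf_eq0 -J2E J2p0 ffunE.
Qed.

Lemma hdot_self p : hdot p p = \sum_i `|p i| ^+ 2.
Proof. by apply: eq_bigr => i _; rewrite normCK. Qed.

Lemma hdot_self_eq0 p : (hdot p p == 0) = (p == 0).
Proof.
apply/idP/eqP => [|->]; last by rewrite hdot_self big1 // => i _; rewrite ffunE normr0 expr0n.
rewrite hdot_self psumr_eq0 => [/allP p0|i _]; last by rewrite exprn_ge0.
apply/ffunP => i; rewrite ffunE; apply/eqP.
by have := p0 i (mem_index_enum i); rewrite sqrf_eq0 normr_eq0.
Qed.

Lemma rho_eigen {p lambda} :
  (forall i, J2 p i = lambda * p i) -> rho p = - 2%:R * lambda^* / hdot p p.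
Proof.
move=> eig; rewrite /rho; have -> : hdot p (J2 p) = lambda^* * hdot p p.
  by rewrite /hdot big_distrr; apply: eq_bigr => i _; rewrite eig rmorphM /=; ring.
have [->|hdot0] := eqVneq (hdot p p) 0; first by rewrite !(mulr0, mul0r, invr0).
by field.
Qed.

Lemma J2_eigen_norm {p k lambda} : p k = 1 -> (forall i, J2 p i = lambda * p i) ->
  `|lambda| = 1 /\ forall i, `|p i| = 1.
Proof.
move=> pk1 eig; have eig_at i : p (succ3 i) ^+ 2 = lambda * p i by rewrite -J2E eig.
have lambdaE : lambda = p (succ3 k) ^+ 2 by rewrite eig_at pk1 mulr1.
have [normu normv] : `|p (succ3 k)| = 1 /\ `|p (succ3 (succ3 k))| = 1.
  apply: norm_eq1_of_cusp; first by rewrite eig_at lambdaE -exprSr.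
  by rewrite -lambdaE mulrC -eig_at succ3_order3 pk1 expr1n.
split=> [|i]; first by rewrite lambdaE normrX normu expr1n.
by have := succ3_orbit k i; rewrite !inE => /or3P[] /eqP ->; rewrite ?pk1 ?normr1.
Qed.

Lemma rho_singular {p k lambda} : p k = 1 -> (forall i, J2 p i = lambda * p i) ->
  rho p * lambda = - (2%:R / 3%:R).
Proof.
move=> pk1 eig; have [normlambda normp] := J2_eigen_norm pk1 eig.
have hdot3 : hdot p p = 3%:R.
  rewrite hdot_self (eq_bigr (fun=> 1)) ?sumr_const ?card_ord // => i _.
  by rewrite normp expr1n.
rewrite (rho_eigen eig) hdot3.
have -> : - 2%:R * lambda^* / 3%:R * lambda = - 2%:R * (lambda * lambda^*) / 3%:R by ring.
by rewrite -normCK normlambda expr1n mulr1 mulNr.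
Qed.

Definition dchart_inv (k : 'I_3) v (i : 'I_3) : C :=
  if unlift k i is Some j then v j else 0.

Lemma chart_inv_k k w : chart_inv k w k = 1.
Proof. by rewrite ffunE unlift_none. Qed.

Lemma chart_inv_neq0 k w : chart_inv k w != 0.
Proof.
by apply: contraTneq isT => /ffunP/(_ k); rewrite chart_inv_k ffunE => /eqP; rewrite oner_eq0.
Qed.

Lemma chart_inv_lift k w j : chart_inv k w (lift k j) = w j.
Proof. by rewrite ffunE liftK. Qed.

Lemma dchart_inv_k k v : dchart_inv k v k = 0.
Proof. by rewrite /dchart_inv unlift_none. Qed.

Lemma dchart_inv_lift k v j : dchart_inv k v (lift k j) = v j.
Proof. by rewrite /dchart_inv liftK. Qed.

Lemma dchart_invZ k (c : C) v i : dchart_inv k (c *: v) i = c * dchart_inv k v i.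
Proof. by rewrite /dchart_inv; case: (unlift k i) => [j|]; rewrite ?ffunE ?mulr0. Qed.

Lemma chart_invD k w v (t : C) i :
  chart_inv k (w + t *: v) i = chart_inv k w i + t * dchart_inv k v i.
Proof.
by rewrite !ffunE /dchart_inv; case: (unlift k i) => [j|]; rewrite ?ffunE ?mulr0 ?addr0.
Qed.

Lemma XchartE k w j : let p := chart_inv k w in
  Xchart k w j = J2 p (lift k j) - p (lift k j) * J2 p k.
Proof. by rewrite /Xchart /dchart ffunE chart_inv_k expr1n divr1 mulr1. Qed.

Lemma WchartE k w j : Wchart k w j = rho (chart_inv k w) * Xchart k w j.
Proof.
rewrite /Wchart /Xchart /dchart; move: (chart_inv_k k w) => /=.
move: (chart_inv k w) => p pk1; rewrite !ffunE pk1 expr1n !divr1 !mulr1.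
by rewrite mulrBr mulrCA.
Qed.

Lemma Xchart_eq0_eigen {k w} : Xchart k w = 0 ->
  forall i, J2 (chart_inv k w) i = J2 (chart_inv k w) k * chart_inv k w i.
Proof.
move=> X0 i; case: (unliftP k i) => [j|] ->; last by rewrite chart_inv_k mulr1.
by apply/eqP; rewrite mulrC -subr_eq0 -XchartE X0 ffunE.
Qed.

Definition dJ2 p (q : 'I_3 -> C) (i : 'I_3) : C := 2%:R * p (succ3 i) * q (succ3 i).

Definition dXchart (k : 'I_3) w v (j : 'I_2) : C :=
  let p := chart_inv k w in let q := dchart_inv k v in
  dJ2 p q (lift k j) - (q (lift k j) * J2 p k + p (lift k j) * dJ2 p q k).

Lemma dXchartZ k w (c : C) v j : dXchart k w (c *: v) j = c * dXchart k w v j.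
Proof. by rewrite /dXchart /dJ2 !dchart_invZ; ring. Qed.

Lemma is_derive_Xchart k w v j : is_derive (0 : C^o) (1 : C^o)
  (fun t : C^o => Xchart k (w + t *: v) j : C^o) (dXchart k w v j).
Proof.
under eq_fun do rewrite XchartE !J2E !chart_invD.
by apply: is_derive_eq; rewrite /dXchart /dJ2 !J2E /GRing.scale /=; ring.
Qed.

Lemma holJacE k w j l : holJac k w j l = dXchart k w (e2 R l) j.
Proof. have dX := is_derive_Xchart k w (e2 R l) j; by rewrite mxE derive_val. Qed.

Lemma mxtrace_holJac k w : \tr (holJac k w) = - 4%:R * J2 (chart_inv k w) k.
Proof.
rewrite mxtrace2 !holJacE /dXchart /dJ2 !J2E.
by case: (succ3_lift k) => -[-> -> ->]; rewrite !dchart_inv_lift ?dchart_inv_k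
  !chart_inv_lift ?chart_inv_k !ffunE /=; ring.
Qed.

(* The second summand is 4 p_(succ3 k) times a coordinate of [Xchart k w]. *)
Lemma det_holJac k w : let p := chart_inv k w in
  \det (holJac k w) =
  7%:R * J2 p k ^+ 2 + 4%:R * p (succ3 k) * (J2 p (succ3 k) - J2 p k * p (succ3 k)).
Proof.
rewrite /= det_mx22 !holJacE /dXchart /dJ2 !J2E.
by case: (succ3_lift k) => -[-> -> ->]; rewrite !dchart_inv_lift ?dchart_inv_k
  !chart_inv_lift ?chart_inv_k !ffunE /=; ring.
Qed.

Lemma holJac_singular {k w} : Xchart k w = 0 ->
  let lambda := J2 (chart_inv k w) k in
  [/\ lambda != 0, \tr (holJac k w) = - 4%:R * lambda,
      \det (holJac k w) = 7%:R * lambda ^+ 2 & rho (chart_inv k w) * lambda = - (2%:R / 3%:R)].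
Proof.
move=> X0 lambda; have eig := Xchart_eq0_eigen X0; have pk1 := chart_inv_k k w.
have [normlambda _] := J2_eigen_norm pk1 eig.
split; first by rewrite -normr_eq0 normlambda oner_eq0.
- exact: mxtrace_holJac.
- by rewrite det_holJac (eig (succ3 k)) subrr mulr0 addr0.
- exact: rho_singular pk1 eig.
Qed.

End Jouanolou.

Section RealJacobian.
Context {R : realType}.
Local Notation C := R[i].
Implicit Types (w v : {ffun 'I_2 -> C}).

Lemma cderivable_rho (P : R -> {ffun 'I_3 -> C}) : P 0 != 0 ->
  (forall i, cderivable 0 (fun t => P t i)) -> cderivable 0 (fun t => rho (P t)).
Proof.
move=> P0 dP.
have dJ2 i : cderivable 0 (fun t => J2 (P t) i).
  by under eq_fun do rewrite J2E expr2; exact: cderivableM.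
have dhdot (Q : R -> {ffun 'I_3 -> C}) : (forall i, cderivable 0 (fun t => Q t i)) ->
    cderivable 0 (fun t => hdot (P t) (Q t)).
  move=> dQ; apply: cderivable_sum => i.
  exact: cderivableM (dP i) (cderivable_conj (dQ i)).
rewrite /rho; under eq_fun do rewrite expr2.
apply: cderivableM.
  exact: cderivableM (is_cderive_cderivable (is_cderive_cst _)) (dhdot _ dJ2).
apply: cderivableV; last exact: cderivableM (dhdot _ dP) (dhdot _ dP).
by rewrite mulf_neq0 // hdot_self_eq0.
Qed.

Lemma is_cderive_chart_inv k w v i :
  is_cderive 0 (fun t => chart_inv k (w + t%:C *: v) i) (dchart_inv k v i).
Proof. by under eq_fun do rewrite chart_invD; exact: is_cderive_affine. Qed.

Lemma is_cderive_Xchart k w v j :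
  is_cderive 0 (fun t => Xchart k (w + t%:C *: v) j) (dXchart k w v j).
Proof.
under eq_fun do rewrite XchartE !J2E !expr2.
have line i := is_cderive_chart_inv k w v i.
apply: is_cderive_eq (is_cderiveD (is_cderiveM (line _) (line _))
  (is_cderiveN (is_cderiveM (line _) (is_cderiveM (line _) (line _))))) _.
by rewrite rmorph0 scale0r addr0 /dXchart /dJ2 !J2E; ring.
Qed.

Lemma realJacW_singular k w : Xchart k w = 0 ->
  realJacW k w = realmx (rho (chart_inv k w) *: holJac k w).
Proof.
move=> X0; apply/matrixP => a b; rewrite [LHS]mxE [RHS]mxE mxE holJacE.
set j : 'I_2 := inord a./2; set l : 'I_2 := inord b./2.
have w0 : w + (0 : R)%:C *: rdir R b = w by rewrite rmorph0 scale0r addr0.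
have [dRe dIm] : is_cderive 0 (fun t => Wchart k (w + t%:C *: rdir R b) j)
    (rho (chart_inv k w) * dXchart k w (rdir R b) j).
  under eq_fun do rewrite WchartE.
  apply: is_cderive_eq (is_cderiveM_eq0 _ (is_cderive_Xchart _ _ _ _) _) _; rewrite ?w0 //.
  - apply: cderivable_rho => [|i]; first by rewrite w0 chart_inv_neq0.
    exact: is_cderive_cderivable (is_cderive_chart_inv _ _ _ _).
  - by rewrite X0 ffunE.
have -> : rho (chart_inv k w) * dXchart k w (e2 R l) j * (if odd b then 'i else 1) =
    rho (chart_inv k w) * dXchart k w (rdir R b) j by rewrite /rdir dXchartZ -/l; ring.
by rewrite /rcoord /= -/j; case: (odd a); rewrite derive_val.
Qed.

End RealJacobian.

Theorem mainTheorem17 (R : realType) :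
  (forall p : {ffun 'I_3 -> R[i]}, p != 0 -> J2 p != 0) /\
  (forall (k : 'I_3) (w : {ffun 'I_2 -> R[i]}),
      Xchart k w = 0 -> hyperbolic (holJac k w)) /\
  (forall (k : 'I_3) (w : {ffun 'I_2 -> R[i]}),
      Xchart k w = 0 -> source (realJacW k w)).
Proof.
have natC (m n : nat) : (m%:R / n%:R : R)%:C = m%:R / n%:R.
  by rewrite rmorphM fmorphV !rmorph_nat.
split; first exact: J2_neq0.
split=> k w X0; have [lambda0 trJ detJ rho_lambda] := holJac_singular X0.
- apply: (@hyperbolic_of_tr_det _ _ (16%:R / 7%:R)).
  + by apply/andP; split; lra.
  + by rewrite detJ mulf_neq0 ?expf_neq0 ?pnatr_eq0.
  + by rewrite trJ detJ natC; field.
- rewrite realJacW_singular //.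
  apply: (@source_realmx _ _ (8%:R / 3%:R) (28%:R / 9%:R)); last 2 first.
  + by rewrite expr2; lra.
  + lra.
  + by rewrite mxtraceZ trJ mulrCA rho_lambda natC; field.
  + rewrite detZ detJ natC.
    transitivity (7%:R * (rho (chart_inv k w) * J2 (chart_inv k w) k) ^+ 2); first ring.
    by rewrite rho_lambda; field.
Qed.
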